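(* A set $\mathcal{K}\subseteq\wp(\mathcal{G})$ is coherent if and only if there is a non-empty set $\mathfrak{D}$ whose members are non-empty sets of coherent sets of desirable gambles, such that $\mathfrak{D}$ has the finite intersection property (there are no $\mathbb{D}_1,\ldots,\mathbb{D}_n\in\mathfrak{D}$ with $\mathbb{D}_1\cap\cdots\cap\mathbb{D}_n=\emptyset$), and for all $B\subseteq\mathcal{G}$: $B\in\mathcal{K}$ iff there are finitely many $\mathbb{D}_1,\ldots,\mathbb{D}_n\in\mathfrak{D}$ such that $B\cap D\neq\emptyset$ for every $D\in\mathbb{D}_1\cap\cdots\cap\mathbb{D}_n$.
   Context: $\Omega$ is a non-empty set and $\mathcal{G}$ is the set of bounded functions $\Omega\to\mathbb{R}$. $f\geq g$ means pointwise $\geq$; $f\gneq g$ means $f\geq g$ and $f\neq g$; $\mathcal{G}_{\gneq 0}=\{f: f\gneq 0\}$. $\mathrm{posi}(B)=\{\sum_{i=1}^m\lambda_i h_i: m\geq1,\lambda_i>0,h_i\in B\}$. A set $D\subseteq\mathcal{G}$ is coherent if $0\notin D$; $\mathcal{G}_{\gneq0}\subseteq D$; $\lambda g\in D$ whenever $g\in D,\lambda>0$; and $f+g\in D$ whenever $f,g\in D$. A set $\mathcal{K}\subseteq\wp(\mathcal{G})$ is coherent if: (K$_\emptyset$) $\emptyset\notin\mathcal{K}$; (K$_0$) if $A\in\mathcal{K}$ then $A\setminus\{0\}\in\mathcal{K}$; (K$_{\gneq0}$) if $g\in\mathcal{G}_{\gneq0}$ then $\{g\}\in\mathcal{K}$;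 (K$_\supseteq$) if $A\in\mathcal{K}$ and $B\supseteq A$ then $B\in\mathcal{K}$; (K$_{\mathrm{Dom}}$) if $A\in\mathcal{K}$ and for each $g\in A$, $f_g$ is a gamble with $f_g\geq g$, then $\{f_g: g\in A\}\in\mathcal{K}$; (K$_{\mathrm{Add}}$) if $A_1,\ldots,A_n\in\mathcal{K}$ (finitely many) and for each $\langle g_1,\ldots,g_n\rangle\in A_1\times\cdots\times A_n$, $f_{\langle g_1,\ldots,g_n\rangle}$ is some member of $\mathrm{posi}(\{g_1,\ldots,g_n\})$, then $\{f_{\langle g_1,\ldots,g_n\rangle}:\langle g_1,\ldots,g_n\rangle\in A_1\times\cdots\times A_n\}\in\mathcal{K}$. *)

(* gambles are real-valued functions on Omega; the set G of
   gambles is carved out by the predicate [gbounded]. Sets are predicates. *)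
From Stdlib Require Import Reals List.
Open Scope R_scope.

Definition gamble (Omega : Type) := Omega -> R.

Definition gbounded {Omega : Type} (f : gamble Omega) : Prop :=
  exists c : R, forall w, Rabs (f w) <= c.

Definition zero_g {Omega : Type} : gamble Omega := fun _ => 0.

Definition gge {Omega : Type} (f g : gamble Omega) : Prop :=
  forall w, g w <= f w.

Definition gpos {Omega : Type} (f : gamble Omega) : Prop :=
  gbounded f /\ gge f zero_g /\ f <> zero_g.

Definition posi {Omega : Type} (B : gamble Omega -> Prop) (f : gamble Omega) : Prop :=
  exists l : list (R * gamble Omega),
    l <> nil /\
    Forall (fun p => 0 < fst p /\ B (snd p)) l /\
    f = (fun w => fold_right (fun p acc => fst p * snd p w + acc) 0 l).

Definition coherent_D {Omega : Type} (D : gamble Omega -> Prop) : Prop :=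
  (forall f, D f -> gbounded f) /\
  ~ D zero_g /\
  (forall g, gpos g -> D g) /\
  (forall g (lam : R), D g -> 0 < lam -> D (fun w => lam * g w)) /\
  (forall f g, D f -> D g -> D (fun w => f w + g w)).

Definition coherent_K {Omega : Type} (K : (gamble Omega -> Prop) -> Prop) : Prop :=
  ~ K (fun _ => False) /\
  (forall A, K A -> K (fun f => A f /\ f <> zero_g)) /\
  (forall g, gpos g -> K (fun f => f = g)) /\
  (forall A B, K A -> (forall f, B f -> gbounded f) -> (forall f, A f -> B f) -> K B) /\
  (forall A (F : gamble Omega -> gamble Omega), K A ->
     (forall g, A g -> gbounded (F g) /\ gge (F g) g) ->
     K (fun h => exists g, A g /\ h = F g)) /\
  (* K_Add: tuples <g_1,...,g_n> are lists of length n *)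
  (forall (n : nat) (A : nat -> gamble Omega -> Prop)
          (F : list (gamble Omega) -> gamble Omega),
     (forall i, (i < n)%nat -> K (A i)) ->
     (forall l, length l = n -> (forall i, (i < n)%nat -> A i (nth i l zero_g)) ->
        posi (fun h => In h l) (F l)) ->
     K (fun h => exists l, length l = n /\
                   (forall i, (i < n)%nat -> A i (nth i l zero_g)) /\ h = F l)).

From Stdlib Require Import Reals List Lra Lia Classical ClassicalEpsilon FunctionalExtensionality.
Open Scope R_scope.

(* Read a family frakD as a base of a filter on the coherent sets of desirable
   gambles: B belongs to K iff "D meets B" holds eventually along it.  For a
   coherent K take the families {D coherent : D meets A}, A in K.  The only
   non-routine point is separation: given A_1, ..., A_n in K and B not in K,
   either some selection g_i in A_i has no positive combination dominated by 0
   or by a member of B, and then the natural extension of the g_i is a coherent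
   D meeting every A_i and missing B; or every selection has such a
   combination, and K_Add, K_Dom, K_0 and K_supseteq put B in K. *)

Lemma exists_nth_list {X : Type} (P : nat -> X -> Prop) (d : X) (n : nat) :
  (forall i, (i < n)%nat -> exists x, P i x) ->
  exists l, length l = n /\ forall i, (i < n)%nat -> P i (nth i l d).
Proof.
  induction n as [|n IH]; intro HP.
  - exists nil. split; [reflexivity | intros i Hi; lia].
  - destruct IH as [l [Hlen Hl]]; [intros i Hi; apply HP; lia |].
    destruct (HP n (Nat.lt_succ_diag_r n)) as [x Hx].
    exists (l ++ x :: nil). split; [rewrite length_app, Hlen; simpl; lia |].
    intros i Hi. destruct (Nat.lt_ge_cases i n) as [Hin | Hni].
    + rewrite app_nth1 by lia. exact (Hl i Hin).
    + replace i with (length l) by lia. rewrite nth_middle, Hlen. exact Hx.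
Qed.

Section Gambles.

Context {Omega : Type}.
Implicit Types (f g h : gamble Omega) (P D : gamble Omega -> Prop).

Lemma gbounded_zero : gbounded (@zero_g Omega).
Proof. exists 0. intro w. unfold zero_g. rewrite Rabs_R0. lra. Qed.

Lemma gbounded_scale g lam : gbounded g -> gbounded (fun w => lam * g w).
Proof.
  intros [c Hc]. exists (Rabs lam * c). intro w.
  rewrite Rabs_mult. apply Rmult_le_compat_l; [apply Rabs_pos | apply Hc].
Qed.

Lemma gbounded_add f g : gbounded f -> gbounded g -> gbounded (fun w => f w + g w).
Proof.
  intros [c1 H1] [c2 H2]. exists (c1 + c2). intro w.
  eapply Rle_trans; [apply Rabs_triang |]. specialize (H1 w). specialize (H2 w). lra.
Qed.

Lemma gbounded_sub f g : gbounded f -> gbounded g -> gbounded (fun w => f w - g w).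
Proof.
  intros [c1 H1] [c2 H2]. exists (c1 + c2). intro w. unfold Rminus.
  eapply Rle_trans; [apply Rabs_triang |]. rewrite Rabs_Ropp.
  specialize (H1 w). specialize (H2 w). lra.
Qed.

Lemma zero_g_ext f : (forall w, f w = 0) -> f = zero_g.
Proof. intro Hf. apply functional_extensionality. exact Hf. Qed.

Lemma gpos_nonneg f : gpos f -> forall w, 0 <= f w.
Proof. intros [_ [Hf _]] w. exact (Hf w). Qed.

Lemma gpos_scale g lam : gpos g -> 0 < lam -> gpos (fun w => lam * g w).
Proof.
  intros [Hb [H0 Hn]] Hlam. split; [apply gbounded_scale, Hb | split].
  - intro w. specialize (H0 w). unfold zero_g in *. nra.
  - intro E. apply Hn, zero_g_ext. intro w.
    pose proof (f_equal (fun k => k w) E) as Ew. unfold zero_g in Ew. simpl in Ew.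
    destruct (Rmult_integral _ _ Ew); [lra | assumption].
Qed.

Lemma gpos_add f g : gpos f -> gpos g -> gpos (fun w => f w + g w).
Proof.
  intros Hf Hg. split; [apply gbounded_add; [apply Hf | apply Hg] | split].
  - intro w. unfold zero_g. pose proof (gpos_nonneg f Hf w). pose proof (gpos_nonneg g Hg w). lra.
  - intro E. apply (proj2 (proj2 Hf)), zero_g_ext. intro w.
    pose proof (f_equal (fun k => k w) E) as Ew. unfold zero_g in Ew. simpl in Ew.
    pose proof (gpos_nonneg f Hf w). pose proof (gpos_nonneg g Hg w). lra.
Qed.

Lemma gpos_sub f g : gbounded f -> gbounded g -> gge f g -> f <> g -> gpos (fun w => f w - g w).
Proof.
  intros Hf Hg Hfg Hne. split; [apply gbounded_sub; assumption | split].
  - intro w. unfold zero_g. specialize (Hfg w). lra.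
  - intro E. apply Hne, functional_extensionality. intro w.
    pose proof (f_equal (fun k => k w) E) as Ew. unfold zero_g in Ew. simpl in Ew. lra.
Qed.

Lemma coherent_D_gge D f g : coherent_D D -> D g -> gbounded f -> gge f g -> D f.
Proof.
  intros [Hb [_ [Hpos [_ Hadd]]]] Dg Hf Hfg.
  destruct (classic (f = g)) as [-> | Hne]; [exact Dg |].
  replace f with (fun w => g w + (f w - g w)) by (apply functional_extensionality; intro; ring).
  apply Hadd; [exact Dg | apply Hpos, gpos_sub; auto].
Qed.

Definition lincomb (l : list (R * gamble Omega)) : gamble Omega :=
  fun w => fold_right (fun p acc => fst p * snd p w + acc) 0 l.

Lemma lincomb_app l1 l2 w : lincomb (l1 ++ l2) w = lincomb l1 w + lincomb l2 w.
Proof. induction l1 as [|p l1 IH]; unfold lincomb in *; simpl; [lra | rewrite IH; ring]. Qed.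

Lemma lincomb_scale lam l w :
  lincomb (map (fun p => (lam * fst p, snd p)) l) w = lam * lincomb l w.
Proof. induction l as [|p l IH]; unfold lincomb in *; simpl; [ring | rewrite IH, Rmult_plus_distr_l, Rmult_assoc; reflexivity]. Qed.

Lemma lincomb_bounded P l :
  (forall h, P h -> gbounded h) ->
  Forall (fun p => 0 < fst p /\ P (snd p)) l -> gbounded (lincomb l).
Proof.
  intros HP Hl. induction Hl as [|[a g] l [_ Pg] _ IH].
  - exact gbounded_zero.
  - exact (gbounded_add _ _ (gbounded_scale g a (HP g Pg)) IH).
Qed.

Lemma lincomb_coherent D l :
  coherent_D D -> l <> nil -> Forall (fun p => 0 < fst p /\ D (snd p)) l -> D (lincomb l).
Proof.
  intros HD. induction l as [|[a g] l IH]; intros Hne Hl; [congruence |].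
  destruct HD as [_ [_ [_ [Hscale Hadd]]]].
  destruct (Forall_inv Hl) as [Ha Dg]. simpl in Ha, Dg.
  destruct l as [|q l].
  - replace (lincomb ((a, g) :: nil)) with (fun w => a * g w)
      by (apply functional_extensionality; intro w; unfold lincomb; simpl; ring).
    exact (Hscale g a Dg Ha).
  - exact (Hadd _ _ (Hscale g a Dg Ha) (IH ltac:(discriminate) (Forall_inv_tail Hl))).
Qed.

Lemma posi_of_mem P h : P h -> posi P h.
Proof.
  intro Ph. exists ((1, h) :: nil). split; [discriminate | split].
  - constructor; [split; [simpl; lra | exact Ph] | constructor].
  - apply functional_extensionality. intro w. simpl. ring.
Qed.

Lemma posi_scale P h lam : posi P h -> 0 < lam -> posi P (fun w => lam * h w).
Proof.
  intros [l [Hne [Hl ->]]] Hlam. exists (map (fun p => (lam * fst p, snd p)) l).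
  split; [destruct l; [congruence | discriminate] | split].
  - apply Forall_map. eapply Forall_impl; [| exact Hl]. intros p [Hp Pp]. simpl. split; [nra | exact Pp].
  - apply functional_extensionality. intro w. symmetry. exact (lincomb_scale lam l w).
Qed.

Lemma posi_add P h1 h2 : posi P h1 -> posi P h2 -> posi P (fun w => h1 w + h2 w).
Proof.
  intros [l1 [Hne1 [Hl1 ->]]] [l2 [_ [Hl2 ->]]]. exists (l1 ++ l2).
  split; [destruct l1; [congruence | discriminate] | split].
  - apply Forall_app. split; assumption.
  - apply functional_extensionality. intro w. symmetry. exact (lincomb_app l1 l2 w).
Qed.

Lemma posi_bounded P f : (forall h, P h -> gbounded h) -> posi P f -> gbounded f.
Proof. intros HP [l [_ [Hl ->]]]. exact (lincomb_bounded P l HP Hl). Qed.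

Lemma posi_coherent D P f : coherent_D D -> (forall h, P h -> D h) -> posi P f -> D f.
Proof.
  intros HD HP [l [Hne [Hl ->]]]. apply (lincomb_coherent D l HD Hne).
  eapply Forall_impl; [| exact Hl]. intros p [Hp Pp]. split; [exact Hp | exact (HP _ Pp)].
Qed.

Definition natural_extension P : gamble Omega -> Prop :=
  fun f => gbounded f /\ (gpos f \/ exists h, posi P h /\ gge f h).

Lemma natural_extension_mem P f : gbounded f -> P f -> natural_extension P f.
Proof.
  intros Hf Pf. split; [exact Hf |]. right. exists f.
  split; [apply posi_of_mem, Pf | intro w; apply Rle_refl].
Qed.

Lemma natural_extension_coherent P :
  (forall h, posi P h -> ~ gge zero_g h) -> coherent_D (natural_extension P).
Proof.
  intro Hnz. split; [| split; [| split; [| split]]].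
  - intros f [Hf _]. exact Hf.
  - intros [_ [[_ [_ H0]] | [h [Hh H0]]]]; [exact (H0 eq_refl) | exact (Hnz h Hh H0)].
  - intros g Hg. split; [apply Hg | left; exact Hg].
  - intros g lam [Hgb [Hg | [h [Hh Hgh]]]] Hlam; split; try apply gbounded_scale, Hgb.
    + left. apply gpos_scale; assumption.
    + right. exists (fun w => lam * h w). split; [apply posi_scale; assumption |].
      intro w. apply Rmult_le_compat_l; [lra | apply Hgh].
  - intros f g [Hfb Hf] [Hgb Hg]. split; [apply gbounded_add; assumption |].
    destruct Hf as [Hf | [h1 [Hh1 Hfh]]], Hg as [Hg | [h2 [Hh2 Hgh]]].
    + left. apply gpos_add; assumption.
    + right. exists h2. split; [exact Hh2 |]. intro w. simpl.
      pose proof (gpos_nonneg f Hf w). specialize (Hgh w). lra.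
    + right. exists h1. split; [exact Hh1 |]. intro w. simpl.
      pose proof (gpos_nonneg g Hg w). specialize (Hfh w). lra.
    + right. exists (fun w => h1 w + h2 w). split; [apply posi_add; assumption |].
      intro w. simpl. specialize (Hfh w). specialize (Hgh w). lra.
Qed.

Definition meets (A D : gamble Omega -> Prop) : Prop := exists f, A f /\ D f.

Definition dominated (B : gamble Omega -> Prop) h : Prop :=
  gge zero_g h \/ exists b, B b /\ gge b h.

Definition selection (n : nat) (A : nat -> gamble Omega -> Prop) (l : list (gamble Omega)) : Prop :=
  length l = n /\ forall i, (i < n)%nat -> A i (nth i l zero_g).

End Gambles.

Definition in_all {X : Type} (ls : list (X -> Prop)) (x : X) : Prop :=
  forall P, In P ls -> P x.

Definition eventually {X : Type} (frak : (X -> Prop) -> Prop) (Q : X -> Prop) : Prop :=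
  exists ls, ls <> nil /\ Forall frak ls /\ forall x, in_all ls x -> Q x.

Section CoherentK.

Context {Omega : Type}.
Variable K : (gamble Omega -> Prop) -> Prop.
Hypothesis K_bounded : forall A, K A -> forall f, A f -> gbounded f.
Hypothesis K_coherent : coherent_K K.

Lemma coherent_K_dominated (A B : gamble Omega -> Prop) :
  K A -> (forall f, B f -> gbounded f) -> (forall h, A h -> dominated B h) -> K B.
Proof.
  intros KA HB Hdom.
  destruct K_coherent as [_ [K_0 [_ [K_sup [K_dom _]]]]].
  pose (G h := epsilon (inhabits zero_g) (fun b => (b = zero_g \/ B b) /\ gge b h)).
  assert (HG : forall h, A h -> (G h = zero_g \/ B (G h)) /\ gge (G h) h).
  { intros h Ah. apply epsilon_spec.
    destruct (Hdom h Ah) as [H0 | [b [Bb Hb]]]; [exists zero_g | exists b]; auto. }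
  assert (KG : K (fun h => exists g, A g /\ h = G g)).
  { apply K_dom; [exact KA |]. intros h Ah. split; [| apply HG, Ah].
    destruct (proj1 (HG h Ah)) as [-> | Bh]; [exact gbounded_zero | exact (HB _ Bh)]. }
  apply (K_sup _ B (K_0 _ KG) HB).
  intros f [[h [Ah ->]] Hnz]. destruct (proj1 (HG h Ah)); [contradiction | assumption].
Qed.

Lemma coherent_K_dominated_selections n (A : nat -> gamble Omega -> Prop) B :
  (forall i, (i < n)%nat -> K (A i)) -> (forall f, B f -> gbounded f) ->
  (forall l, selection n A l -> exists h, posi (fun x => In x l) h /\ dominated B h) ->
  K B.
Proof.
  intros KA HB Hsel.
  destruct K_coherent as [_ [_ [_ [_ [_ K_add]]]]].
  pose (F l := epsilon (inhabits zero_g) (fun h => posi (fun x => In x l) h /\ dominated B h)).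
  assert (HF : forall l, selection n A l -> posi (fun x => In x l) (F l) /\ dominated B (F l))
    by (intros l Hl; apply epsilon_spec, Hsel, Hl).
  apply (coherent_K_dominated
           (fun h => exists l, length l = n /\ (forall i, (i < n)%nat -> A i (nth i l zero_g))
                          /\ h = F l) B); [| exact HB |].
  - apply K_add; [exact KA |]. intros l Hlen Hl. exact (proj1 (HF l (conj Hlen Hl))).
  - intros h [l [Hlen [Hl ->]]]. exact (proj2 (HF l (conj Hlen Hl))).
Qed.

Lemma coherent_K_separation n (A : nat -> gamble Omega -> Prop) B :
  (forall i, (i < n)%nat -> K (A i)) -> (forall f, B f -> gbounded f) -> ~ K B ->
  exists D, coherent_D D /\ (forall i, (i < n)%nat -> meets (A i) D) /\ (forall f, B f -> ~ D f).
Proof.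
  intros KA HB HnB.
  destruct (classic (exists l, selection n A l /\
                      forall h, posi (fun x => In x l) h -> ~ dominated B h))
    as [[l [[Hlen Hl] Hnd]] | Hall].
  2: { exfalso. apply HnB, (coherent_K_dominated_selections n A); [exact KA | exact HB |].
       intros l Hl. apply NNPP. intro Hno. apply Hall. exists l. split; [exact Hl |].
       intros h Hh Hd. apply Hno. exists h. split; assumption. }
  exists (natural_extension (fun x => In x l)). split; [| split].
  - apply natural_extension_coherent. intros h Hh H0. apply (Hnd h Hh). left. exact H0.
  - intros i Hi. exists (nth i l zero_g). split; [exact (Hl i Hi) |].
    apply natural_extension_mem; [exact (K_bounded _ (KA i Hi) _ (Hl i Hi)) | apply nth_In; lia].
  - intros f Bf [_ [Hpos | [h [Hh Hfh]]]].
    + destruct K_coherent as [_ [_ [K_pos [K_sup _]]]].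
      apply HnB, (K_sup (fun g => g = f)); [apply K_pos, Hpos | exact HB | intros g ->; exact Bf].
    + apply (Hnd h Hh). right. exists f. split; assumption.
Qed.

Definition meeting_families : ((gamble Omega -> Prop) -> Prop) -> Prop :=
  fun DD => exists A, K A /\ forall D, DD D <-> coherent_D D /\ meets A D.

Lemma meeting_families_separation ls B :
  Forall meeting_families ls -> (forall f, B f -> gbounded f) -> ~ K B ->
  exists D, in_all ls D /\ forall f, B f -> ~ D f.
Proof.
  intros Hls HB HnB. rewrite Forall_forall in Hls.
  destruct (exists_nth_list
              (fun i A => K A /\ forall D, nth i ls (fun _ => False) D <-> coherent_D D /\ meets A D)
              (fun _ => False) (length ls)) as [As [_ HAs]].
  { intros i Hi. apply Hls, nth_In, Hi. }
  destruct (coherent_K_separation (length ls) (fun i => nth i As (fun _ => False)) B)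
    as [D [Dc [Dm Db]]]; [intros i Hi; apply HAs, Hi | exact HB | exact HnB |].
  exists D. split; [| exact Db].
  intros DD HDD. destruct (In_nth ls DD (fun _ => False) HDD) as [i [Hi <-]].
  apply (HAs i Hi). split; [exact Dc | exact (Dm i Hi)].
Qed.

Lemma meeting_families_inhabited : inhabited Omega -> exists DD, meeting_families DD.
Proof.
  intros [w0].
  assert (Hone : gpos (fun _ : Omega => 1)).
  { split; [exists 1; intro w; rewrite Rabs_R1; lra | split].
    - intro w. unfold zero_g. lra.
    - intro E. pose proof (f_equal (fun k => k w0) E) as E0. unfold zero_g in E0. simpl in E0. lra. }
  exists (fun D => coherent_D D /\ meets (fun f => f = fun _ => 1) D).
  exists (fun f => f = fun _ => 1). split; [exact (proj1 (proj2 (proj2 K_coherent)) _ Hone) | tauto].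
Qed.

Lemma meeting_families_coherent DD :
  meeting_families DD -> (exists D, DD D) /\ (forall D, DD D -> coherent_D D).
Proof.
  intros HDD. split.
  - destruct (meeting_families_separation (DD :: nil) (fun _ => False)) as [D [HD _]].
    + constructor; [exact HDD | constructor].
    + intros f [].
    + exact (proj1 K_coherent).
    + exists D. apply HD. left. reflexivity.
  - destruct HDD as [A [_ HA]]. intros D HD. exact (proj1 (proj1 (HA D) HD)).
Qed.

Lemma meeting_families_fip ls : Forall meeting_families ls -> exists D, in_all ls D.
Proof.
  intro Hls. destruct (meeting_families_separation ls (fun _ => False) Hls) as [D [HD _]].
  - intros f [].
  - exact (proj1 K_coherent).
  - exists D. exact HD.
Qed.

Lemma meeting_families_eventually B :
  (forall f, B f -> gbounded f) -> (K B <-> eventually meeting_families (meets B)).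
Proof.
  intro HB. split.
  - intro KB. exists ((fun D => coherent_D D /\ meets B D) :: nil).
    split; [discriminate | split].
    + constructor; [exists B; split; [exact KB | tauto] | constructor].
    + intros D HD. exact (proj2 (HD _ (or_introl eq_refl))).
  - intros [ls [_ [Hls Hev]]]. apply NNPP. intro HnB.
    destruct (meeting_families_separation ls B Hls HB HnB) as [D [HD Hdisj]].
    destruct (Hev D HD) as [f [Bf Df]]. exact (Hdisj f Bf Df).
Qed.

End CoherentK.

Section Eventually.

Context {Omega : Type}.
Variable frak : ((gamble Omega -> Prop) -> Prop) -> Prop.
Hypothesis frak_inhabited : exists DD, frak DD.
Hypothesis frak_coherent : forall DD, frak DD -> forall D, DD D -> coherent_D D.
Hypothesis frak_fip : forall ls, ls <> nil -> Forall frak ls -> exists D, in_all ls D.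

Lemma eventually_true : eventually frak (fun _ => True).
Proof.
  destruct frak_inhabited as [DD HDD]. exists (DD :: nil).
  split; [discriminate | split; [constructor; [exact HDD | constructor] | trivial]].
Qed.

Lemma eventually_mono (Q Q' : (gamble Omega -> Prop) -> Prop) :
  eventually frak Q -> (forall D, coherent_D D -> Q D -> Q' D) -> eventually frak Q'.
Proof.
  intros [ls [Hne [Hls HQ]]] HQQ'. exists ls. split; [exact Hne | split; [exact Hls |]].
  intros D HD. apply HQQ'; [| exact (HQ D HD)].
  destruct ls as [|DD ls]; [congruence |].
  apply (frak_coherent DD (Forall_inv Hls)), HD. left. reflexivity.
Qed.

Lemma eventually_and (Q Q' : (gamble Omega -> Prop) -> Prop) :
  eventually frak Q -> eventually frak Q' -> eventually frak (fun D => Q D /\ Q' D).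
Proof.
  intros [ls [Hne [Hls HQ]]] [ls' [_ [Hls' HQ']]]. exists (ls ++ ls').
  split; [destruct ls; [congruence | discriminate] | split; [apply Forall_app; split; assumption |]].
  intros D HD. split; [apply HQ | apply HQ']; intros DD HDD; apply HD, in_or_app; auto.
Qed.

Lemma eventually_forall_lt n (Q : nat -> (gamble Omega -> Prop) -> Prop) :
  (forall i, (i < n)%nat -> eventually frak (Q i)) ->
  eventually frak (fun D => forall i, (i < n)%nat -> Q i D).
Proof.
  induction n as [|n IH]; intro HQ.
  - apply (eventually_mono _ _ eventually_true). intros D _ _ i Hi. lia.
  - apply (eventually_mono _ _ (eventually_and _ _ (IH (fun i Hi => HQ i ltac:(lia)))
                                             (HQ n (Nat.lt_succ_diag_r n)))).
    intros D _ [Hlt Hn] i Hi. destruct (Nat.lt_ge_cases i n) as [Hin | Hni].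
    + exact (Hlt i Hin).
    + replace i with n by lia. exact Hn.
Qed.

Lemma eventually_meets_empty : ~ eventually frak (meets (fun _ => False)).
Proof.
  intros [ls [Hne [Hls Hev]]]. destruct (frak_fip ls Hne Hls) as [D HD].
  destruct (Hev D HD) as [f [[] _]].
Qed.

Lemma eventually_meets_superset (A B : gamble Omega -> Prop) :
  (forall f, A f -> B f) -> eventually frak (meets A) -> eventually frak (meets B).
Proof.
  intros HAB HA. apply (eventually_mono _ _ HA). intros D _ [f [Af Df]]. exists f. auto.
Qed.

Lemma eventually_meets_nonzero (A : gamble Omega -> Prop) :
  eventually frak (meets A) -> eventually frak (meets (fun f => A f /\ f <> zero_g)).
Proof.
  intro HA. apply (eventually_mono _ _ HA). intros D HD [f [Af Df]].
  exists f. split; [split; [exact Af |] | exact Df].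
  intros ->. exact (proj1 (proj2 HD) Df).
Qed.

Lemma eventually_meets_gpos g : gpos g -> eventually frak (meets (fun f => f = g)).
Proof.
  intro Hg. apply (eventually_mono _ _ eventually_true). intros D HD _.
  exists g. split; [reflexivity | exact (proj1 (proj2 (proj2 HD)) g Hg)].
Qed.

Lemma eventually_meets_dominance (A : gamble Omega -> Prop) F :
  (forall g, A g -> gbounded g) -> (forall g, A g -> gbounded (F g) /\ gge (F g) g) ->
  eventually frak (meets A) -> eventually frak (meets (fun h => exists g, A g /\ h = F g)).
Proof.
  intros HAb HF HA. apply (eventually_mono _ _ HA). intros D HD [g [Ag Dg]].
  exists (F g). split; [exists g; split; [exact Ag | reflexivity] |].
  destruct (HF g Ag) as [Fb Fge]. exact (coherent_D_gge D (F g) g HD Dg Fb Fge).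
Qed.

Lemma eventually_meets_posi n (A : nat -> gamble Omega -> Prop) F :
  (forall i, (i < n)%nat -> eventually frak (meets (A i))) ->
  (forall l, selection n A l -> posi (fun x => In x l) (F l)) ->
  eventually frak (meets (fun h => exists l, length l = n /\
                           (forall i, (i < n)%nat -> A i (nth i l zero_g)) /\ h = F l)).
Proof.
  intros HA HF. apply (eventually_mono _ _ (eventually_forall_lt n _ HA)).
  intros D HD Hmeet.
  destruct (exists_nth_list (fun i f => A i f /\ D f) zero_g n Hmeet) as [l [Hlen Hl]].
  exists (F l). split.
  - exists l. split; [exact Hlen | split; [intros i Hi; apply Hl, Hi | reflexivity]].
  - apply (posi_coherent D (fun x => In x l)); [exact HD | | apply HF; split; [exact Hlen |]].
    + intros x Hx. destruct (In_nth l x zero_g Hx) as [i [Hi <-]]. apply Hl. lia.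
    + intros i Hi. apply Hl, Hi.
Qed.

Lemma coherent_K_of_eventually (K : (gamble Omega -> Prop) -> Prop) :
  (forall A, K A -> forall f, A f -> gbounded f) ->
  (forall B, (forall f, B f -> gbounded f) -> (K B <-> eventually frak (meets B))) ->
  coherent_K K.
Proof.
  intros HK Hrep.
  assert (Kev : forall A, K A -> eventually frak (meets A))
    by (intros A KA; exact (proj1 (Hrep A (HK A KA)) KA)).
  split; [| split; [| split; [| split; [| split]]]].
  - intro K0. exact (eventually_meets_empty (Kev _ K0)).
  - intros A KA. apply Hrep; [intros f [Af _]; exact (HK A KA f Af) |].
    apply eventually_meets_nonzero, Kev, KA.
  - intros g Hg. apply Hrep; [intros f ->; apply Hg | apply eventually_meets_gpos, Hg].
  - intros A B KA HB HAB. apply Hrep; [exact HB | exact (eventually_meets_superset A B HAB (Kev A KA))].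
  - intros A F KA HF. apply Hrep; [intros h [g [Ag ->]]; apply HF, Ag |].
    exact (eventually_meets_dominance A F (HK A KA) HF (Kev A KA)).
  - intros n A F KA HF. apply Hrep; [| apply eventually_meets_posi; [intros i Hi; apply Kev, KA, Hi |]].
    + intros h [l [Hlen [Hl ->]]]. apply (posi_bounded (fun x => In x l)); [| apply HF; assumption].
      intros x Hx. destruct (In_nth l x zero_g Hx) as [i [Hi <-]]. rewrite Hlen in Hi.
      exact (HK _ (KA i Hi) _ (Hl i Hi)).
    + intros l [Hlen Hl]. apply HF; assumption.
Qed.

End Eventually.

Theorem mainTheorem12 (Omega : Type) (HOmega : inhabited Omega)
  (K : (gamble Omega -> Prop) -> Prop)
  (HK : forall A, K A -> forall f, A f -> gbounded f) :
  coherent_K K <->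
  exists frakD : ((gamble Omega -> Prop) -> Prop) -> Prop,
    (exists DD, frakD DD) /\
    (forall DD, frakD DD -> (exists D, DD D) /\ (forall D, DD D -> coherent_D D)) /\
    (forall ls : list ((gamble Omega -> Prop) -> Prop),
       ls <> nil -> Forall frakD ls ->
       exists D, forall DD, In DD ls -> DD D) /\
    (forall B : gamble Omega -> Prop, (forall f, B f -> gbounded f) ->
       (K B <->
        exists ls : list ((gamble Omega -> Prop) -> Prop),
          ls <> nil /\ Forall frakD ls /\
          forall D, (forall DD, In DD ls -> DD D) -> exists f, B f /\ D f)).
Proof.
  split.
  - intro HcK. exists (meeting_families K). split; [| split; [| split]].
    + exact (meeting_families_inhabited K HcK HOmega).
    + exact (meeting_families_coherent K HK HcK).
    + intros ls _. exact (meeting_families_fip K HK HcK ls).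
    + exact (meeting_families_eventually K HK HcK).
  - intros [frakD [Hinh [Hcoh [Hfip Hrep]]]].
    apply (coherent_K_of_eventually frakD Hinh (fun DD HDD => proj2 (Hcoh DD HDD)) Hfip K HK Hrep).
Qed.
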